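(* Let $k\in\mathbb{Z}$ with $k<-2$ and put $j=k/2$. Then $D^{k,1}_0\cong D^{+,k}_{k/2}/W^+_{k/2}$ and $D^{k,-1}_0\cong D^{-,k}_{k/2}/W^-_{k/2}$, where $W^\pm_{k/2}\subset D^{\pm,k}_{k/2}$ is the $\mathcal{U}(\widehat{\mathfrak{sl}}_2)$-submodule generated by $J^\mp_{-1}(1\otimes|k/2,0\rangle_\pm)$.
   Context: $\mathfrak{sl}_2$ has basis $J^+,J^-,J^0$ with $[J^+,J^-]=J^0$, $[J^0,J^\pm]=\pm2J^\pm$. For $j\in-\tfrac12\mathbb{N}$, $D^+_j$ is the $\mathfrak{sl}_2$-module with basis $\{|j,m\rangle_+\}_{m\ge0}$, $J^0|j,m\rangle_+=2(m-j)|j,m\rangle_+$, $J^+|j,m\rangle_+=\sqrt{(m+1)(m-2j)}|j,m+1\rangle_+$, $J^-|j,m\rangle_+=-\sqrt{m(m-1-2j)}|j,m-1\rangle_+$; $D^-_j$ has basis $\{|j,m\rangle_-\}_{m\ge0}$, $J^0|j,m\rangle_-=2(j-m)|j,m\rangle_-$, $J^+|j,m\rangle_-=-\sqrt{m(m-1-2j)}|j,m-1\rangle_-$, $J^-|j,m\rangle_-=\sqrt{(m+1)(m-2j)}|j,m+1\rangle_-$; $D_0=\mathbb{C}$ is the trivial module. $\widehat{\mathfrak{sl}}_2$ has generators $J^a_n$ ($a\in\{+,-,0\}$, $n\in\mathbb{Z}$), $K$, $d$ with $[J^+_m,J^-_n]=J^0_{m+n}+Km\delta_{m+n,0}$, $[J^0_m,J^\pm_n]=\pm2J^\pm_{m+n}$,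 $[J^0_m,J^0_n]=2Km\delta_{m+n,0}$, $[J^\pm_m,J^\pm_n]=0$, $[d,J^a_n]=nJ^a_n$, $K$ central; $J^a_0$ is identified with $J^a$. With $\mathfrak{r}_+=\mathrm{span}\{J^a_n:n\ge1\}$, $\mathfrak{k}=\mathrm{span}\{J^a_0,K,d\}$, the prolongation of $V\in\{D^\pm_j,D_0\}$ at level $k\neq-2$ is $V^k=\mathcal{U}(\widehat{\mathfrak{sl}}_2)\otimes_{\mathcal{U}(\mathfrak{k}\oplus\mathfrak{r}_+)}V^{(k)}$, where on $V^{(k)}=V$ the element $K$ acts as $k$, $\mathfrak{r}_+$ as $0$, and $d$ by the scalar $-\frac{j(j+1)}{k+2}$ (for $D^\pm_j$) resp. $0$ (for $D_0$). Write $D^{\pm,k}_j=(D^\pm_j)^k$. The spectral flow automorphism $\vartheta_s$ ($s\in\mathbb{Z}$) is $J^\pm_n\mapsto J^\pm_{n\mp s}$, $J^0_n\mapsto J^0_n-sK\delta_{n,0}$, $K\mapsto K$, $d\mapsto d+\frac s2J^0_0-\frac{s^2}4K$; for a module $(W,\rho)$, $W^s=(W,\rho\circ\vartheta_s)$, and $D^{k,s}_0=((D_0)^k)^s$. *)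

From HB Require Import structures.
From mathcomp Require Import all_boot all_order all_algebra.
Set Implicit Arguments. Unset Strict Implicit. Unset Printing Implicit Defensive.
Import Order.TTheory GRing.Theory Num.Theory.
Local Open Scope ring_scope.

Section Affine.
Variable C : numClosedFieldType.

Record affact (V : Type) := AffAct {
  aJp : int -> V -> V;
  aJm : int -> V -> V;
  aJ0 : int -> V -> V;
  aK  : V -> V;
  ad  : V -> V }.

Record sl2act (V : Type) := SL2Act {
  sJp : V -> V;
  sJm : V -> V;
  sJ0 : V -> V }.

Definition linmap (V W : lmodType C) (f : V -> W) : Prop :=
  forall (a : C) (u v : V), f (a *: u + v) = a *: f u + f v.

Record is_affmod (V : lmodType C) (A : affact V) : Prop := {
  lin_Jp : forall n, linmap (aJp A n);
  lin_Jm : forall n, linmap (aJm A n);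
  lin_J0 : forall n, linmap (aJ0 A n);
  lin_K  : linmap (aK A);
  lin_d  : linmap (ad A);
  br_pm : forall m n v, aJp A m (aJm A n v) - aJm A n (aJp A m v)
            = aJ0 A (m + n) v + (if m + n == 0 then m%:~R *: aK A v else 0);
  br_0p : forall m n v, aJ0 A m (aJp A n v) - aJp A n (aJ0 A m v)
            = 2 *: aJp A (m + n) v;
  br_0m : forall m n v, aJ0 A m (aJm A n v) - aJm A n (aJ0 A m v)
            = - (2 *: aJm A (m + n) v);
  br_00 : forall m n v, aJ0 A m (aJ0 A n v) - aJ0 A n (aJ0 A m v)
            = (if m + n == 0 then (2 * m%:~R) *: aK A v else 0);
  br_pp : forall m n v, aJp A m (aJp A n v) - aJp A n (aJp A m v) = 0;
  br_mm : forall m n v, aJm A m (aJm A n v) - aJm A n (aJm A m v) = 0;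
  br_dp : forall n v, ad A (aJp A n v) - aJp A n (ad A v) = n%:~R *: aJp A n v;
  br_dm : forall n v, ad A (aJm A n v) - aJm A n (ad A v) = n%:~R *: aJm A n v;
  br_d0 : forall n v, ad A (aJ0 A n v) - aJ0 A n (ad A v) = n%:~R *: aJ0 A n v;
  br_Kp : forall n v, aK A (aJp A n v) = aJp A n (aK A v);
  br_Km : forall n v, aK A (aJm A n v) = aJm A n (aK A v);
  br_K0 : forall n v, aK A (aJ0 A n v) = aJ0 A n (aK A v);
  br_Kd : forall v, aK A (ad A v) = ad A (aK A v) }.

Definition is_affhom (V W : lmodType C) (A : affact V) (B : affact W)
    (f : V -> W) : Prop :=
  linmap f /\
  (forall n v, f (aJp A n v) = aJp B n (f v)) /\
  (forall n v, f (aJm A n v) = aJm B n (f v)) /\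
  (forall n v, f (aJ0 A n v) = aJ0 B n (f v)) /\
  (forall v, f (aK A v) = aK B (f v)) /\
  (forall v, f (ad A v) = ad B (f v)).

(* f : V^(k) -> N is a homomorphism of (k + r_+)-modules, where on V^(k)
   J^a_0 acts as J^a, K as k, d as the scalar h and r_+ as 0. *)
Definition is_parhom (V W : lmodType C) (s : sl2act V) (k h : C)
    (B : affact W) (f : V -> W) : Prop :=
  linmap f /\
  (forall v, f (sJp s v) = aJp B 0 (f v)) /\
  (forall v, f (sJm s v) = aJm B 0 (f v)) /\
  (forall v, f (sJ0 s v) = aJ0 B 0 (f v)) /\
  (forall v, aK B (f v) = k *: f v) /\
  (forall v, ad B (f v) = h *: f v) /\
  (forall n v, 0 < n ->
     [/\ aJp B n (f v) = 0, aJm B n (f v) = 0 & aJ0 B n (f v) = 0]).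

(* (M, A, iota) is the prolongation V^k = U(g) (x)_{U(k + r_+)} V^(k), with
   iota v = 1 (x) v, characterized by the universal property of the induced
   module. *)
Definition is_prolongation (V : lmodType C) (s : sl2act V) (k h : C)
    (M : lmodType C) (A : affact M) (iota : V -> M) : Prop :=
  is_affmod A /\ is_parhom s k h A iota /\
  forall (N : lmodType C) (B : affact N), is_affmod B ->
  forall f : V -> N, is_parhom s k h B f ->
    exists g : M -> N, [/\ is_affhom A B g, (forall v, g (iota v) = f v) &
      forall g' : M -> N, is_affhom A B g' -> (forall v, g' (iota v) = f v) ->
        forall x, g' x = g x].

Definition sflow (V : lmodType C) (s : int) (A : affact V) : affact V :=
  AffAct (fun n => aJp A (n - s)) (fun n => aJm A (n + s))
    (fun n v => if n == 0 then aJ0 A 0 v - s%:~R *: aK A v else aJ0 A n v)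
    (aK A)
    (fun v => ad A v + (s%:~R / 2) *: aJ0 A 0 v - (s%:~R ^+ 2 / 4) *: aK A v).

Definition gen_sub (M : lmodType C) (A : affact M) (w : M) (x : M) : Prop :=
  forall P : M -> Prop, P w -> P 0 ->
    (forall (a : C) u v, P u -> P v -> P (a *: u + v)) ->
    (forall n u, P u -> P (aJp A n u)) ->
    (forall n u, P u -> P (aJm A n u)) ->
    (forall n u, P u -> P (aJ0 A n u)) ->
    (forall u, P u -> P (aK A u)) ->
    (forall u, P u -> P (ad A u)) -> P x.

(* D^+_j and D^-_j, realized on {poly C}: the basis vector |j,m>_+- is 'X^m *)
Definition Dplus (j : C) : sl2act {poly C} := SL2Act
  (fun p : {poly C} => \sum_(m < size p)
      (p`_m * sqrtC ((m.+1)%:R * (m%:R - 2 * j))) *: ('X^(m.+1) : {poly C}))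
  (fun p : {poly C} => \sum_(m < size p)
      (- (p`_m * sqrtC (m%:R * (m%:R - 1 - 2 * j)))) *: ('X^(m.-1) : {poly C}))
  (fun p : {poly C} => \sum_(m < size p) (p`_m * (2 * (m%:R - j))) *: ('X^m : {poly C})).

Definition Dminus (j : C) : sl2act {poly C} := SL2Act
  (fun p : {poly C} => \sum_(m < size p)
      (- (p`_m * sqrtC (m%:R * (m%:R - 1 - 2 * j)))) *: ('X^(m.-1) : {poly C}))
  (fun p : {poly C} => \sum_(m < size p)
      (p`_m * sqrtC ((m.+1)%:R * (m%:R - 2 * j))) *: ('X^(m.+1) : {poly C}))
  (fun p : {poly C} => \sum_(m < size p) (p`_m * (2 * (j - m%:R))) *: ('X^m : {poly C})).

Definition D0 : sl2act C^o := SL2Act (fun _ => 0) (fun _ => 0) (fun _ => 0).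

End Affine.

From HB Require Import structures.
From mathcomp Require Import all_boot all_order all_algebra.
From mathcomp Require Import ring zify ring_quotient generic_quotient.
From Stdlib Require Import ClassicalEpsilon.
Import Order.TTheory GRing.Theory Num.Theory.
Local Open Scope ring_scope.

Set Implicit Arguments. Unset Strict Implicit. Unset Printing Implicit Defensive.

(* With j = k/2, the vacuum |0> of D_0^{k,1} has exactly the data of the lowest
   vector of D^+_j: the flowed J^0_0 = J^0_0 - K acts by -k = -2j, the flowed
   d = d + J^0_0/2 - K/4 acts by -k/4 = -j(j+1)/(k+2), the positive modes kill
   it, and the normalised vectors (J^+_{-1})^m |0> carry the zero-mode action
   of D^+_j. The universal property of D^{+,k}_j thus gives
   phi : D^{+,k}_j -> D_0^{k,1}, which sends J^-_{-1}|j,0> to J^-_0|0> = 0 and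
   so kills W^+. Conversely, in (D^{+,k}_j / W^+) flowed by -1 the class of
   |j,0> satisfies the vacuum conditions, so the universal property of D_0^k
   gives psi back; both composites are identities by the uniqueness part of
   the universal properties. The Chevalley involution J^+ <-> J^-,
   J^0 -> -J^0 exchanges D^+_j and D^-_j and turns the flow by 1 into the flow
   by -1, which gives the second isomorphism. *)

Section TrivialExtension.
Variables (R : comNzRingType) (V : lmodType R).

Definition triv_ext := (R * V)%type.
HB.instance Definition _ := GRing.Zmodule.on triv_ext.

Definition triv_ext_one : triv_ext := (1, 0).
Definition triv_ext_mul (p q : triv_ext) : triv_ext :=
  (p.1 * q.1, p.1 *: q.2 + q.1 *: p.2).

Lemma triv_ext_mulA : associative triv_ext_mul.
Proof.
case=> a x [b y] [c z]; rewrite /triv_ext_mul /=; congr pair; first by rewrite mulrA.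
by rewrite !scalerDr !scalerA (mulrC c a) (mulrC c b) !addrA.
Qed.

Lemma triv_ext_mulC : commutative triv_ext_mul.
Proof. by case=> a x [b y]; rewrite /triv_ext_mul /= mulrC addrC. Qed.

Lemma triv_ext_mul1 : left_id triv_ext_one triv_ext_mul.
Proof. by case=> a x; rewrite /triv_ext_mul /= mul1r scale1r scaler0 addr0. Qed.

Lemma triv_ext_mulDl : left_distributive triv_ext_mul +%R.
Proof.
case=> a x [b y] [c z]; rewrite /triv_ext_mul /=; congr pair; first by rewrite mulrDl.
by rewrite scalerDl scalerDr addrACA.
Qed.

Lemma triv_ext_one_neq0 : triv_ext_one != 0.
Proof. by rewrite /triv_ext_one xpair_eqE oner_eq0. Qed.

HB.instance Definition _ := GRing.Zmodule_isComNzRing.Build triv_ext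
  triv_ext_mulA triv_ext_mulC triv_ext_mul1 triv_ext_mulDl triv_ext_one_neq0.

Definition triv_ext_vec (x : V) : triv_ext := (0, x).
Definition triv_ext_scal (c : R) : triv_ext := (c, 0).

Lemma triv_ext_vec_inj : injective triv_ext_vec.
Proof. by move=> x y []. Qed.

Lemma triv_ext_vecD x y : triv_ext_vec (x + y) = triv_ext_vec x + triv_ext_vec y.
Proof. by rewrite /triv_ext_vec; congr pair; rewrite /= addr0. Qed.

Lemma triv_ext_vecN x : triv_ext_vec (- x) = - triv_ext_vec x.
Proof. by rewrite /triv_ext_vec; congr pair; rewrite /= oppr0. Qed.

Lemma triv_ext_vec0 : triv_ext_vec 0 = 0.
Proof. by []. Qed.

Lemma triv_ext_vecZ c x : triv_ext_vec (c *: x) = triv_ext_scal c * triv_ext_vec x.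
Proof. by congr pair; rewrite /= ?mulr0 // scaler0 addr0. Qed.

Lemma triv_ext_scal_is_zmod_morphism : zmod_morphism triv_ext_scal.
Proof. by move=> a b; congr pair; rewrite /= subrr. Qed.

Lemma triv_ext_scal_is_monoid_morphism : monoid_morphism triv_ext_scal.
Proof. by split=> // a b; congr pair; rewrite /= !scaler0 addr0. Qed.

HB.instance Definition _ := GRing.isZmodMorphism.Build R triv_ext triv_ext_scal
  triv_ext_scal_is_zmod_morphism.
HB.instance Definition _ := GRing.isMonoidMorphism.Build R triv_ext triv_ext_scal
  triv_ext_scal_is_monoid_morphism.

End TrivialExtension.

(* A module identity holds in V as soon as it holds in the commutative ring
   R * V with (a, x) (b, y) = (a b, a y + b x), into which V embeds additively
   with scalars acting by multiplication; there [ring] decides it. *)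
Ltac lmod_ring :=
  apply: triv_ext_vec_inj;
  rewrite ?(triv_ext_vecD, triv_ext_vecN, triv_ext_vecZ, triv_ext_vec0); ring.

Section LinearMaps.
Variable C : numClosedFieldType.

Section LinmapTheory.
Variables (V W : lmodType C) (f : V -> W) (hf : linmap f).

Lemma linmap0 : f 0 = 0.
Proof.
have := hf 1 0 0; rewrite scaler0 add0r scale1r => /eqP.
by rewrite -subr_eq subrr eq_sym => /eqP.
Qed.

Lemma linmapD u v : f (u + v) = f u + f v.
Proof. by have := hf 1 u v; rewrite !scale1r. Qed.

Lemma linmapZ a u : f (a *: u) = a *: f u.
Proof. by have := hf a u 0; rewrite !addr0 linmap0 addr0. Qed.

Lemma linmapN u : f (- u) = - f u.
Proof. by rewrite -scaleN1r linmapZ scaleN1r. Qed.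

Lemma linmapB u v : f (u - v) = f u - f v.
Proof. by rewrite linmapD linmapN. Qed.

Lemma linmap_sum I (r : seq I) (P : pred I) (F : I -> V) :
  f (\sum_(i <- r | P i) F i) = \sum_(i <- r | P i) f (F i).
Proof. by elim/big_rec2: _ => [|i y x _ <-]; rewrite ?linmap0 ?linmapD. Qed.

End LinmapTheory.

Lemma linmap_comp (U V W : lmodType C) (f : V -> W) (g : U -> V) :
  linmap f -> linmap g -> linmap (f \o g).
Proof. by move=> hf hg a u v /=; rewrite hg hf. Qed.

Lemma linmap_add (V W : lmodType C) (f g : V -> W) :
  linmap f -> linmap g -> linmap (fun v => f v + g v).
Proof. by move=> hf hg a u v; rewrite hf hg scalerDr addrACA. Qed.

Lemma linmap_opp (V W : lmodType C) (f : V -> W) :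
  linmap f -> linmap (fun v => - f v).
Proof. by move=> hf a u v; rewrite hf opprD scalerN. Qed.

Lemma linmap_scale (V W : lmodType C) (c : C) (f : V -> W) :
  linmap f -> linmap (fun v => c *: f v).
Proof. by move=> hf a u v; rewrite hf scalerDr !scalerA mulrC. Qed.

End LinearMaps.

Section AffineModules.
Variable C : numClosedFieldType.

Definition acteq (V : Type) (A B : affact V) :=
  [/\ forall n v, aJp A n v = aJp B n v, forall n v, aJm A n v = aJm B n v,
      forall n v, aJ0 A n v = aJ0 B n v, forall v, aK A v = aK B v
    & forall v, ad A v = ad B v].

Lemma acteq_refl (V : Type) (A : affact V) : acteq A A.
Proof. by []. Qed.

Lemma affhom_ext (V W : lmodType C) (A A' : affact V) (B B' : affact W) f :
  acteq A A' -> acteq B B' -> is_affhom A B f -> is_affhom A' B' f.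
Proof.
case=> e1 e2 e3 e4 e5 [] f1 f2 f3 f4 f5 [hf [h1 [h2 [h3 [h4 h5]]]]].
by do ![split] => // *; rewrite -?e1 -?e2 -?e3 -?e4 -?e5 -?f1 -?f2 -?f3 -?f4 -?f5.
Qed.

Lemma affhom_id (V : lmodType C) (A : affact V) : is_affhom A A id.
Proof. by do ![split]. Qed.

Lemma affhom_comp (U V W : lmodType C) (A : affact U) (B : affact V) (D : affact W) f g :
  is_affhom B D f -> is_affhom A B g -> is_affhom A D (f \o g).
Proof.
move=> [lf [f1 [f2 [f3 [f4 f5]]]]] [lg [g1 [g2 [g3 [g4 g5]]]]].
split; first exact: linmap_comp.
by do ![split] => *; rewrite /= ?g1 ?f1 ?g2 ?f2 ?g3 ?f3 ?g4 ?f4 ?g5 ?f5.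
Qed.

Lemma parhom_comp (V W N : lmodType C) (s : sl2act V) (k h : C)
    (B : affact W) (B' : affact N) (f : V -> W) (g : W -> N) :
  is_affhom B B' g -> is_parhom s k h B f -> is_parhom s k h B' (g \o f).
Proof.
move=> [lg [g1 [g2 [g3 [g4 g5]]]]] [lf [f1 [f2 [f3 [f4 [f5 f6]]]]]].
split; first exact: linmap_comp.
do 5?[split] => /= [v|v|v|v|v|n v /(f6 n v)[e1 e2 e3]].
- by rewrite f1 g1.
- by rewrite f2 g2.
- by rewrite f3 g3.
- by rewrite -g4 f4 (linmapZ lg).
- by rewrite -g5 f5 (linmapZ lg).
- by rewrite -g1 -g2 -g3 e1 e2 e3 (linmap0 lg).
Qed.

Section Brackets.
Variables (V : lmodType C) (A : affact V) (hA : is_affmod A).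

Lemma JmJp m n v : aJm A n (aJp A m v) = aJp A m (aJm A n v) -
   (aJ0 A (m + n) v + (if m + n == 0 then m%:~R *: aK A v else 0)).
Proof. by rewrite -(br_pm hA); lmod_ring. Qed.

Lemma J0Jp m n v : aJ0 A m (aJp A n v) = aJp A n (aJ0 A m v) + 2 *: aJp A (m + n) v.
Proof. by rewrite -(br_0p hA); lmod_ring. Qed.

Lemma J0Jm m n v : aJ0 A m (aJm A n v) = aJm A n (aJ0 A m v) - 2 *: aJm A (m + n) v.
Proof. by rewrite -(br_0m hA); lmod_ring. Qed.

Lemma J0J0 m n v : aJ0 A m (aJ0 A n v) = aJ0 A n (aJ0 A m v) +
   (if m + n == 0 then (2 * m%:~R) *: aK A v else 0).
Proof. by rewrite -(br_00 hA); lmod_ring. Qed.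

Lemma JpJp m n v : aJp A m (aJp A n v) = aJp A n (aJp A m v).
Proof. by apply/eqP; rewrite -subr_eq0 (br_pp hA). Qed.

Lemma dJp n v : ad A (aJp A n v) = aJp A n (ad A v) + n%:~R *: aJp A n v.
Proof. by rewrite -(br_dp hA); lmod_ring. Qed.

Lemma dJm n v : ad A (aJm A n v) = aJm A n (ad A v) + n%:~R *: aJm A n v.
Proof. by rewrite -(br_dm hA); lmod_ring. Qed.

Lemma dJ0 n v : ad A (aJ0 A n v) = aJ0 A n (ad A v) + n%:~R *: aJ0 A n v.
Proof. by rewrite -(br_d0 hA); lmod_ring. Qed.

End Brackets.

End AffineModules.

Ltac affmod_linE hA := repeat first [
  rewrite (linmapB (lin_Jp hA _)) | rewrite (linmapD (lin_Jp hA _)) |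
  rewrite (linmapZ (lin_Jp hA _)) | rewrite (linmapN (lin_Jp hA _)) |
  rewrite (linmap0 (lin_Jp hA _)) |
  rewrite (linmapB (lin_Jm hA _)) | rewrite (linmapD (lin_Jm hA _)) |
  rewrite (linmapZ (lin_Jm hA _)) | rewrite (linmapN (lin_Jm hA _)) |
  rewrite (linmap0 (lin_Jm hA _)) |
  rewrite (linmapB (lin_J0 hA _)) | rewrite (linmapD (lin_J0 hA _)) |
  rewrite (linmapZ (lin_J0 hA _)) | rewrite (linmapN (lin_J0 hA _)) |
  rewrite (linmap0 (lin_J0 hA _)) |
  rewrite (linmapB (lin_K hA)) | rewrite (linmapD (lin_K hA)) |
  rewrite (linmapZ (lin_K hA)) | rewrite (linmapN (lin_K hA)) |
  rewrite (linmap0 (lin_K hA)) |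
  rewrite (linmapB (lin_d hA)) | rewrite (linmapD (lin_d hA)) |
  rewrite (linmapZ (lin_d hA)) | rewrite (linmapN (lin_d hA)) |
  rewrite (linmap0 (lin_d hA)) ].

Section SpectralFlow.
Variable C : numClosedFieldType.

Lemma sflowJp (V : lmodType C) (A : affact V) s n v :
  aJp (sflow s A) n v = aJp A (n - s) v.
Proof. by []. Qed.

Lemma sflow_linJ0 (V : lmodType C) (A : affact V) (s : int) n :
  is_affmod A -> linmap (aJ0 (sflow s A) n).
Proof.
move=> hA /=; case: eqP => _; last exact: lin_J0.
by apply: linmap_add; [exact: lin_J0 | apply/linmap_opp/linmap_scale/lin_K].
Qed.

Lemma sflow_lind (V : lmodType C) (A : affact V) (s : int) :
  is_affmod A -> linmap (ad (sflow s A)).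
Proof.
move=> hA; apply: linmap_add; last by apply/linmap_opp/linmap_scale/lin_K.
by apply: linmap_add; [exact: lin_d | apply/linmap_scale/lin_J0].
Qed.

Lemma sflow_affmod (V : lmodType C) (A : affact V) (s : int) :
  is_affmod A -> is_affmod (sflow s A).
Proof.
move=> hA; split=> /=.
- by move=> n; apply: (lin_Jp hA).
- by move=> n; apply: (lin_Jm hA).
- by move=> n; apply: sflow_linJ0.
- exact: lin_K.
- exact: sflow_lind.
- move=> m n v; rewrite (br_pm hA).
  have -> : m - s + (n + s) = m + n by lia.
  case: eqP => [mn0|]; last by rewrite !addr0.
  rewrite mn0 rmorphB /=; lmod_ring.
- move=> m n v; case: eqP => [->|_]; last by rewrite (br_0p hA) addrA.
  affmod_linE hA; rewrite J0Jp // (br_Kp hA) !add0r; lmod_ring.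
- move=> m n v; case: eqP => [->|_]; last by rewrite (br_0m hA) addrA.
  affmod_linE hA; rewrite J0Jm // (br_Km hA) !add0r; lmod_ring.
- move=> m n v; case: (m =P 0) => [->|m0]; case: (n =P 0) => [->|n0] /=.
  + by rewrite subrr mulr0 scale0r.
  + affmod_linE hA; rewrite J0J0 // (br_K0 hA) add0r; case: eqP => // _; lmod_ring.
  + affmod_linE hA; rewrite J0J0 // (br_K0 hA) addr0; case: eqP => // _; lmod_ring.
  + exact: (br_00 hA).
- by move=> *; rewrite (br_pp hA).
- by move=> *; rewrite (br_mm hA).
- move=> n v; affmod_linE hA; rewrite dJp // J0Jp // (br_Kp hA) !add0r.
  rewrite ?scalerDr ?scalerN ?scalerA divfK ?pnatr_eq0 // rmorphB /=; lmod_ring.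
- move=> n v; affmod_linE hA; rewrite dJm // J0Jm // (br_Km hA) !add0r.
  rewrite ?scalerDr ?scalerN ?scalerA divfK ?pnatr_eq0 // rmorphD /=; lmod_ring.
- move=> n v; case: eqP => [->|n0]; affmod_linE hA;
    rewrite !dJ0 ?(br_K0 hA) ?(br_Kd hA) //.
    by rewrite !scale0r; lmod_ring.
  rewrite (J0J0 hA 0 n) add0r; move/eqP: n0 => /negPf ->; lmod_ring.
- by move=> *; rewrite (br_Kp hA).
- by move=> *; rewrite (br_Km hA).
- by move=> n v; case: eqP => _; affmod_linE hA; rewrite ?(br_K0 hA).
- by move=> v; affmod_linE hA; rewrite (br_Kd hA) (br_K0 hA).
Qed.

Lemma affhom_sflow (V W : lmodType C) (A : affact V) (B : affact W) g (s : int) :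
  is_affhom A B g -> is_affhom (sflow s A) (sflow s B) g.
Proof.
move=> [lg [g1 [g2 [g3 [g4 g5]]]]].
do ![split] => //= [n v|v].
  by case: eqP => _; rewrite ?(linmapB lg) ?(linmapZ lg) g3 ?g4.
by rewrite (linmapB lg) (linmapD lg) !(linmapZ lg) g5 g3 g4.
Qed.

Lemma sflowK (V : lmodType C) (s : int) (B : affact V) :
  acteq (sflow s (sflow (- s) B)) B.
Proof.
split=> [n v|n v|n v|v|v] /=.
- by rewrite opprK subrK.
- by rewrite addrK.
- by case: eqP => [->|//]; rewrite ?eqxx mulrNz; lmod_ring.
- by [].
have collect (x y z : V) (a1 a2 b1 b2 c : C) :
    a1 + a2 = 0 -> b1 + a2 * c + b2 = 0 ->
    x + a1 *: y - b1 *: z + a2 *: (y - c *: z) - b2 *: z = x.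
  move=> h1 h2; have -> : b2 = - b1 - a2 * c.
    by apply/eqP; rewrite -subr_eq0 -h2; apply/eqP; ring.
  have -> : a2 = - a1 by apply/eqP; rewrite -subr_eq0 opprK addrC h1.
  lmod_ring.
by rewrite mulrNz sqrrN; apply: collect; field.
Qed.

End SpectralFlow.

Section Prolongation.
Variables (C : numClosedFieldType) (V : lmodType C) (s : sl2act V) (k h : C).
Variables (M : lmodType C) (A : affact M) (iota : V -> M).
Hypothesis hP : is_prolongation s k h A iota.

Lemma prolong_affmod : is_affmod A.
Proof. by case: hP. Qed.

Lemma prolong_parhom : is_parhom s k h A iota.
Proof. by case: hP => _ []. Qed.

Lemma prolong_lift (N : lmodType C) (B : affact N) (f : V -> N) :
  is_affmod B -> is_parhom s k h B f ->
  exists g : M -> N, is_affhom A B g /\ forall v, g (iota v) = f v.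
Proof.
by case: hP => _ [_ univ] hB hf; have [g [? ? _]] := univ N B hB f hf; exists g.
Qed.

Lemma prolong_uniq (N : lmodType C) (B : affact N) (g g' : M -> N) :
  is_affmod B -> is_affhom A B g -> is_affhom A B g' ->
  (forall v, g (iota v) = g' (iota v)) -> g =1 g'.
Proof.
case: hP => _ [hi univ] hB hg hg' e x.
have [g0 [_ _ uniq]] := univ N B hB (g \o iota) (parhom_comp hg hi).
by rewrite (uniq g) // (uniq g') // => v; rewrite /= e.
Qed.

End Prolongation.

Section Chevalley.
Variable C : numClosedFieldType.

Definition omega (V : lmodType C) (A : affact V) : affact V :=
  AffAct (aJm A) (aJp A) (fun n v => - aJ0 A n v) (aK A) (ad A).
Definition omega_sl2 (V : lmodType C) (s : sl2act V) : sl2act V :=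
  SL2Act (sJm s) (sJp s) (fun v => - sJ0 s v).

Definition sleq (V : Type) (s s' : sl2act V) :=
  [/\ forall v, sJp s v = sJp s' v, forall v, sJm s v = sJm s' v
    & forall v, sJ0 s v = sJ0 s' v].

Lemma omega_affmod (V : lmodType C) (A : affact V) : is_affmod A -> is_affmod (omega A).
Proof.
move=> hA; split=> /=.
- exact: lin_Jm hA.
- exact: lin_Jp hA.
- by move=> n; apply/linmap_opp/lin_J0.
- exact: lin_K hA.
- exact: lin_d hA.
- move=> m n v; rewrite -opprB (br_pm hA) opprD (addrC n m).
  case: eqP => [h|_]; last by rewrite oppr0.
  have -> : n = - m by lia.
  by rewrite rmorphN /= scaleNr opprK.
- by move=> m n v; rewrite (linmapN (lin_Jm hA _)) opprK addrC -opprB (br_0m hA) opprK.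
- by move=> m n v; rewrite (linmapN (lin_Jp hA _)) opprK addrC -opprB (br_0p hA).
- by move=> m n v; rewrite !(linmapN (lin_J0 hA _)) !opprK (br_00 hA).
- exact: br_mm hA.
- exact: br_pp hA.
- exact: br_dm hA.
- exact: br_dp hA.
- by move=> n v; rewrite (linmapN (lin_d hA)) opprK addrC -opprB (br_d0 hA) scalerN.
- exact: br_Km hA.
- exact: br_Kp hA.
- by move=> n v; rewrite (linmapN (lin_K hA)) (br_K0 hA).
- exact: br_Kd hA.
Qed.

Lemma omega_affhom (V W : lmodType C) (A : affact V) (B : affact W) g :
  is_affhom A B g -> is_affhom (omega A) (omega B) g.
Proof.
move=> [lg [g1 [g2 [g3 [g4 g5]]]]].
by do ![split] => // n v /=; rewrite (linmapN lg) g3.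
Qed.

Lemma omegaK (V : lmodType C) (A : affact V) : acteq (omega (omega A)) A.
Proof. by split=> //= n v; rewrite opprK. Qed.

Lemma omega_sl2K (V : lmodType C) (s : sl2act V) : sleq (omega_sl2 (omega_sl2 s)) s.
Proof. by split=> //= v; rewrite opprK. Qed.

Lemma parhom_ext (V W : lmodType C) (s s' : sl2act V) k h (B B' : affact W) f :
  sleq s s' -> acteq B B' -> is_parhom s k h B f -> is_parhom s' k h B' f.
Proof.
case=> e1 e2 e3 [] b1 b2 b3 b4 b5 [lf [f1 [f2 [f3 [f4 [f5 f6]]]]]].
split=> //; do 5?split.
- by move=> v; rewrite -e1 f1 b1.
- by move=> v; rewrite -e2 f2 b2.
- by move=> v; rewrite -e3 f3 b3.
- by move=> v; rewrite -b4 f4.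
- by move=> v; rewrite -b5 f5.
- by move=> n v /(f6 n v) [x1 x2 x3]; rewrite -b1 -b2 -b3.
Qed.

Lemma omega_parhom (V W : lmodType C) (s : sl2act V) k h (B : affact W) f :
  is_parhom s k h B f -> is_parhom (omega_sl2 s) k h (omega B) f.
Proof.
move=> [lf [f1 [f2 [f3 [f4 [f5 f6]]]]]].
split=> //; do 5?split=> //; first by move=> v /=; rewrite (linmapN lf) f3.
by move=> n v /(f6 n v) [x1 x2 x3] /=; rewrite x1 x2 x3 oppr0.
Qed.

Lemma prolong_ext (V : lmodType C) (s s' : sl2act V) k h (M : lmodType C)
    (A : affact M) iota :
  sleq s s' -> is_prolongation s k h A iota -> is_prolongation s' k h A iota.
Proof.
move=> e [hA [hi univ]]; split=> //; split; first exact: parhom_ext e (acteq_refl _) hi.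
move=> N B hB f hf.
have [e1 e2 e3] := e; have e' : sleq s' s by split.
by have [g ?] := univ N B hB f (parhom_ext e' (acteq_refl _) hf); exists g.
Qed.

Lemma omega_prolong (V : lmodType C) (s : sl2act V) k h (M : lmodType C)
    (A : affact M) iota :
  is_prolongation s k h A iota -> is_prolongation (omega_sl2 s) k h (omega A) iota.
Proof.
move=> [hA [hi univ]]; split; first exact: omega_affmod.
split; first exact: omega_parhom.
move=> N B hB f hf.
have hf' : is_parhom s k h (omega B) f.
  exact: parhom_ext (omega_sl2K s) (acteq_refl _) (omega_parhom hf).
have [g [g1 g2 g3]] := univ N (omega B) (omega_affmod hB) f hf'.
exists g; split => //; first exact: affhom_ext (acteq_refl _) (omegaK B) (omega_affhom g1).
move=> g' hg' e; apply: g3 => //.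
exact: affhom_ext (omegaK A) (acteq_refl _) (omega_affhom hg').
Qed.

Lemma gen_sub_omega (V : lmodType C) (A : affact V) w x :
  gen_sub (omega A) w x <-> gen_sub A w x.
Proof.
split=> hx P Pw P0 Pl PJp PJm PJ0 PK Pd; apply: hx => //= n u Pu.
  by rewrite -scaleN1r -[X in P X]addr0; apply/Pl/P0/PJ0.
by rewrite -[aJ0 A n u]opprK -scaleN1r -[X in P X]addr0; apply/Pl/P0/PJ0.
Qed.

Lemma omega_sflow (V : lmodType C) (s : int) (A : affact V) :
  acteq (omega (sflow s (omega A))) (sflow (- s) A).
Proof.
split=> [n v|n v|n v|v|v] /=.
- by rewrite opprK.
- by [].
- by case: eqP => _; rewrite ?mulrNz //; lmod_ring.
- by [].
- by rewrite mulrNz sqrrN !mulNr; lmod_ring.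
Qed.

Lemma omega_Dminus (j : C) : sleq (omega_sl2 (Dminus j)) (Dplus j).
Proof.
split=> // p /=; rewrite -sumrN; apply: eq_bigr => i _.
by rewrite -scaleNr -!mulrN opprB.
Qed.

Lemma omega_D0 : sleq (omega_sl2 (D0 C)) (D0 C).
Proof. by split=> // v /=; rewrite oppr0. Qed.

End Chevalley.

Section QuotientModule.
Local Open Scope quotient_scope.
Variables (K : fieldType) (V : lmodType K) (W : V -> Prop).
Hypotheses (W0 : W 0) (Wlin : forall a u v, W u -> W v -> W (a *: u + v)).

(* The quotient library needs a boolean predicate; [W] is decided classically. *)
Definition subspace_pred : {pred V} :=
  fun x => if excluded_middle_informative (W x) then true else false.

Lemma subspace_predP x : reflect (W x) (x \in subspace_pred).
Proof. by rewrite unfold_in; case: excluded_middle_informative; constructor. Qed.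

Lemma subspace_pred_zmod_closed : zmod_closed subspace_pred.
Proof.
split=> [|x y /subspace_predP Wx /subspace_predP Wy]; apply/subspace_predP => //.
by rewrite addrC -scaleN1r; apply: Wlin.
Qed.

HB.instance Definition _ := GRing.isZmodClosed.Build V subspace_pred
  subspace_pred_zmod_closed.

Definition quot_space := ring_quotient.Quotient.quot subspace_pred.
HB.instance Definition _ := GRing.Zmodule.on quot_space.
HB.instance Definition _ := Choice.on quot_space.

Definition qproj (x : V) : quot_space := \pi_quot_space x.
Definition qrepr (q : quot_space) : V := repr q.

Lemma qreprK q : qproj (qrepr q) = q.
Proof. exact: reprK. Qed.

Lemma qprojP x y : qproj x = qproj y <-> W (x - y).
Proof.
have e := ring_quotient.Quotient.idealrBE subspace_pred x y.
split=> [h|/subspace_predP]; last by rewrite e => /eqP.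
by apply/subspace_predP; rewrite e; apply/eqP.
Qed.

Lemma qproj0 : qproj 0 = 0.
Proof. exact: raddf0. Qed.

Lemma qprojD x y : qproj (x + y) = qproj x + qproj y.
Proof. exact: raddfD. Qed.

Lemma qprojN x : qproj (- x) = - qproj x.
Proof. exact: raddfN. Qed.

Lemma qprojB x y : qproj (x - y) = qproj x - qproj y.
Proof. exact: raddfB. Qed.

Lemma qproj_eq0 x : qproj x = 0 <-> W x.
Proof. by rewrite -qproj0 qprojP subr0. Qed.


Lemma qrepr_qproj x : W (qrepr (qproj x) - x).
Proof. by apply/qprojP; rewrite qreprK. Qed.

Definition qscale (a : K) (q : quot_space) : quot_space := qproj (a *: qrepr q).

Lemma qproj_scale a x : qproj (a *: x) = qscale a (qproj x).
Proof.
apply/qprojP; rewrite -scalerBr -[X in W X]addr0.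
by apply/Wlin/W0/qprojP; rewrite qreprK.
Qed.

Lemma qscaleA a b q : qscale a (qscale b q) = qscale (a * b) q.
Proof. by rewrite -[q]qreprK -!qproj_scale scalerA. Qed.

Lemma qscale1 : left_id 1 qscale.
Proof. by move=> q; rewrite -[q]qreprK -qproj_scale scale1r. Qed.

Lemma qscaleDr : right_distributive qscale +%R.
Proof.
by move=> a p q; rewrite -[p]qreprK -[q]qreprK -qprojD -!qproj_scale scalerDr qprojD.
Qed.

Lemma qscaleDl q : {morph qscale^~ q : a b / a + b}.
Proof. by move=> a b; rewrite -[q]qreprK -!qproj_scale scalerDl qprojD. Qed.

HB.instance Definition _ := GRing.Zmodule_isLmodule.Build K quot_space
  qscaleA qscale1 qscaleDr qscaleDl.

Lemma qprojZ a x : qproj (a *: x) = a *: qproj x.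
Proof. exact: qproj_scale. Qed.

Lemma qproj_linmap a u v : qproj (a *: u + v) = a *: qproj u + qproj v.
Proof. by rewrite qprojD qprojZ. Qed.

End QuotientModule.

Section Submodules.
Variable C : numClosedFieldType.

Record is_submod (V : lmodType C) (A : affact V) (W : V -> Prop) : Prop := IsSubmod {
  submod0 : W 0;
  submod_lin : forall a u v, W u -> W v -> W (a *: u + v);
  submodJp : forall n u, W u -> W (aJp A n u);
  submodJm : forall n u, W u -> W (aJm A n u);
  submodJ0 : forall n u, W u -> W (aJ0 A n u);
  submodK : forall u, W u -> W (aK A u);
  submodd : forall u, W u -> W (ad A u) }.

Lemma gen_sub_gen (V : lmodType C) (A : affact V) (w : V) : gen_sub A w w.
Proof. by move=> P. Qed.

Lemma gen_sub_submod (V : lmodType C) (A : affact V) (w : V) :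
  is_submod A (gen_sub A w).
Proof.
split=> [|a u v Wu Wv|n u Wu|n u Wu|n u Wu|u Wu|u Wu] P Pw P0 Pl PJp PJm PJ0 PK Pd //;
  have IH y (Wy : gen_sub A w y) : P y := Wy P Pw P0 Pl PJp PJm PJ0 PK Pd.
- exact: Pl (IH _ Wu) (IH _ Wv).
- exact: PJp (IH _ Wu).
- exact: PJm (IH _ Wu).
- exact: PJ0 (IH _ Wu).
- exact: PK (IH _ Wu).
- exact: Pd (IH _ Wu).
Qed.

Lemma affhom_gen_sub0 (V U : lmodType C) (A : affact V) (B : affact U) f w x :
  is_affmod B -> is_affhom A B f -> f w = 0 -> gen_sub A w x -> f x = 0.
Proof.
move=> hB [lf [f1 [f2 [f3 [f4 f5]]]]] fw Wx; apply: (Wx (fun y => f y = 0)).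
- exact: fw.
- exact: linmap0 lf.
- by move=> a u v fu fv; rewrite lf fu fv scaler0 addr0.
- by move=> n u fu; rewrite f1 fu (linmap0 (lin_Jp hB _)).
- by move=> n u fu; rewrite f2 fu (linmap0 (lin_Jm hB _)).
- by move=> n u fu; rewrite f3 fu (linmap0 (lin_J0 hB _)).
- by move=> u fu; rewrite f4 fu (linmap0 (lin_K hB)).
- by move=> u fu; rewrite f5 fu (linmap0 (lin_d hB)).
Qed.

Section QuotientAction.
Variables (M : lmodType C) (A : affact M) (hA : is_affmod A).
Variables (W : M -> Prop) (hW : is_submod A W).

Local Notation Q := (quot_space (submod0 hW) (submod_lin hW)).
Local Notation pr := (qproj (submod0 hW) (submod_lin hW)).
Local Notation qr := (@qrepr _ _ W (submod0 hW) (submod_lin hW)).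

Definition quot_act : affact Q := AffAct
  (fun n q => pr (aJp A n (qr q))) (fun n q => pr (aJm A n (qr q)))
  (fun n q => pr (aJ0 A n (qr q))) (fun q => pr (aK A (qr q)))
  (fun q => pr (ad A (qr q))).

Lemma qproj_stable (F : M -> M) : linmap F -> (forall u, W u -> W (F u)) ->
  forall x, pr (F (qr (pr x))) = pr (F x).
Proof.
move=> lF WF x; apply/qprojP; rewrite -(linmapB lF); apply: WF.
exact: qrepr_qproj.
Qed.

Let prJp n := qproj_stable (lin_Jp hA n) (submodJp hW n).
Let prJm n := qproj_stable (lin_Jm hA n) (submodJm hW n).
Let prJ0 n := qproj_stable (lin_J0 hA n) (submodJ0 hW n).
Let prK := qproj_stable (lin_K hA) (submodK hW).
Let prd := qproj_stable (lin_d hA) (submodd hW).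

Lemma quot_act_lin (F : M -> M) : linmap F -> (forall u, W u -> W (F u)) ->
  linmap (fun q => pr (F (qr q))).
Proof.
move=> lF WF a u v.
have -> : a *: u + v = pr (a *: qr u + qr v) by rewrite qproj_linmap !qreprK.
by rewrite qproj_stable // lF qproj_linmap.
Qed.

Lemma qproj_affhom : is_affhom A quot_act pr.
Proof.
split; first by move=> a u v; rewrite qproj_linmap.
by do ![split] => *; rewrite /= ?prJp ?prJm ?prJ0 ?prK ?prd.
Qed.

Lemma quot_act_affmod : is_affmod quot_act.
Proof.
split=> /=.
- by move=> n; apply/quot_act_lin/(submodJp hW)/lin_Jp.
- by move=> n; apply/quot_act_lin/(submodJm hW)/lin_Jm.
- by move=> n; apply/quot_act_lin/(submodJ0 hW)/lin_J0.
- exact/quot_act_lin/(submodK hW)/lin_K.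
- exact/quot_act_lin/(submodd hW)/lin_d.
- move=> m n v; rewrite prJp prJm -qprojB (br_pm hA) qprojD.
  by case: eqP => _; rewrite ?qprojZ ?qproj0.
- by move=> m n v; rewrite prJp prJ0 -qprojB (br_0p hA) qprojZ.
- by move=> m n v; rewrite prJm prJ0 -qprojB (br_0m hA) qprojN qprojZ.
- move=> m n v; rewrite !prJ0 -qprojB (br_00 hA).
  by case: eqP => _; rewrite ?qprojZ ?qproj0.
- by move=> m n v; rewrite !prJp -qprojB (br_pp hA) qproj0.
- by move=> m n v; rewrite !prJm -qprojB (br_mm hA) qproj0.
- by move=> n v; rewrite prJp prd -qprojB (br_dp hA) qprojZ.
- by move=> n v; rewrite prJm prd -qprojB (br_dm hA) qprojZ.
- by move=> n v; rewrite prJ0 prd -qprojB (br_d0 hA) qprojZ.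
- by move=> n v; rewrite prJp prK (br_Kp hA).
- by move=> n v; rewrite prJm prK (br_Km hA).
- by move=> n v; rewrite prJ0 prK (br_K0 hA).
- by move=> v; rewrite prd prK (br_Kd hA).
Qed.

Lemma affhom_factor (N : lmodType C) (B : affact N) (phi : M -> N) :
  is_affhom A B phi -> (forall x, W x -> phi x = 0) ->
  is_affhom quot_act B (phi \o qr) /\ forall x, phi (qr (pr x)) = phi x.
Proof.
move=> [lphi [h1 [h2 [h3 [h4 h5]]]]] phiW.
have E x : phi (qr (pr x)) = phi x.
  by apply/eqP; rewrite -subr_eq0 -(linmapB lphi) phiW //; apply: qrepr_qproj.
split=> //; split.
  move=> a p q /=.
  have -> : a *: p + q = pr (a *: qr p + qr q) by rewrite qproj_linmap !qreprK.
  by rewrite E lphi.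
by do ![split] => *; rewrite /= ?E ?h1 ?h2 ?h3 ?h4 ?h5.
Qed.

End QuotientAction.

End Submodules.

Section Vacuum.
Variable C : numClosedFieldType.

Definition is_vacuum (N : lmodType C) (B : affact N) (k h : C) (y : N) : Prop :=
  [/\ aJp B 0 y = 0, aJm B 0 y = 0, aJ0 B 0 y = 0, aK B y = k *: y & ad B y = h *: y]
  /\ forall n, 0 < n -> [/\ aJp B n y = 0, aJm B n y = 0 & aJ0 B n y = 0].

Lemma parhom_D0_vacuum (N : lmodType C) (B : affact N) (k h : C) f :
  is_parhom (D0 C) k h B f -> is_vacuum B k h (f 1).
Proof.
move=> [lf [f1 [f2 [f3 [f4 [f5 f6]]]]]].
split=> [|n]; last exact: f6.
by split; rewrite ?f4 ?f5 //; [rewrite -f1 | rewrite -f2 | rewrite -f3]; exact: linmap0 lf.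
Qed.

Lemma vacuum_parhom_D0 (N : lmodType C) (B : affact N) (k h : C) y :
  is_affmod B -> is_vacuum B k h y -> is_parhom (D0 C) k h B (fun c => c *: y).
Proof.
move=> hB [[yJp yJm yJ0 yK yd] ypos]; split.
  by move=> a u v; rewrite scalerDl scalerA.
do 5?split.
- by move=> c /=; rewrite scale0r (linmapZ (lin_Jp hB _)) yJp scaler0.
- by move=> c /=; rewrite scale0r (linmapZ (lin_Jm hB _)) yJm scaler0.
- by move=> c /=; rewrite scale0r (linmapZ (lin_J0 hB _)) yJ0 scaler0.
- by move=> c; rewrite (linmapZ (lin_K hB)) yK !scalerA mulrC.
- by move=> c; rewrite (linmapZ (lin_d hB)) yd !scalerA mulrC.
- move=> n c /ypos[e1 e2 e3].
  by rewrite (linmapZ (lin_Jp hB _)) (linmapZ (lin_Jm hB _)) (linmapZ (lin_J0 hB _))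
    e1 e2 e3 !scaler0.
Qed.

End Vacuum.

Section DplusLowest.
Variable C : numClosedFieldType.

Definition Dplus_coef (j : C) (m : nat) : C := sqrtC ((m.+1)%:R * (m%:R - 2 * j)).

Lemma Dplus_JpX (j : C) m : sJp (Dplus j) 'X^m = Dplus_coef j m *: 'X^(m.+1).
Proof.
rewrite /= size_polyXn big_ord_recr /= coefXn eqxx mul1r big1 ?add0r // => i _.
by rewrite coefXn ltn_eqF ?mul0r ?scale0r.
Qed.

Lemma Dplus_Jm1 (j : C) : sJm (Dplus j) 1 = 0.
Proof. by rewrite /= size_poly1 big_ord1 coef1 /= !mul0r sqrtC0 mulr0 oppr0 scale0r. Qed.

Lemma Dplus_J01 (j : C) : sJ0 (Dplus j) 1 = - (2 * j) *: 1.
Proof. by rewrite /= size_poly1 big_ord1 coef1 /= mul1r expr0 sub0r mulrN. Qed.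

End DplusLowest.

Section AtLevel.
Variables (C : numClosedFieldType) (kC : C).
Hypotheses (kC_Nnat : forall m : nat, kC != m%:R) (kC_neqN2 : kC + 2 != 0).

Local Notation j := (kC / 2).
Local Notation h := (- (j * (j + 1)) / (kC + 2)).

Lemma twice_half : 2 * j = kC.
Proof. by rewrite mulrC divfK // pnatr_eq0. Qed.

Lemma weight_half_level : h = - (kC / 4).
Proof. by move: kC_neqN2; move: kC => x hx; field. Qed.

Lemma Dplus_coef_sqr m : Dplus_coef j m ^+ 2 = (m.+1)%:R * (m%:R - kC).
Proof. by rewrite sqrtCK twice_half. Qed.

Lemma Dplus_coef_neq0 m : Dplus_coef j m != 0.
Proof.
rewrite -sqrf_eq0 Dplus_coef_sqr mulf_eq0 negb_or pnatr_eq0 /=.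
by rewrite subr_eq0 eq_sym kC_Nnat.
Qed.

Lemma Dplus_flow_vacuum (N : lmodType C) (B : affact N) (f : {poly C} -> N) :
  is_affmod B -> is_parhom (Dplus j) kC h B f -> aJm B (-1) (f 1) = 0 ->
  is_vacuum (sflow (-1) B) kC 0 (f 1).
Proof.
move=> hB [lf [f1 [f2 [f3 [f4 [f5 f6]]]]]] fJm.
have fJ0 : aJ0 B 0 (f 1) = - kC *: f 1 by rewrite -f3 Dplus_J01 (linmapZ lf) twice_half.
split; first split=> /=.
- by rewrite sub0r opprK; case: (f6 1 1 isT).
- by rewrite add0r.
- by rewrite fJ0 f4 mulrN1z; lmod_ring.
- exact: f4.
- rewrite f5 fJ0 f4 weight_half_level mulrN1z sqrrN expr1n !scalerA -scalerDl -scalerBl.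
  by congr (_ *: _); field.
move=> n n_gt0 /=; have -> : (n == 0) = false by apply/eqP; lia.
split; first by case: (f6 (n - -1) 1) => //; lia.
  have [->|n_neq1] := eqVneq n 1; first by rewrite addrN -f2 Dplus_Jm1 (linmap0 lf).
  by case: (f6 (n + -1) 1) => //; move/eqP: n_neq1; lia.
by case: (f6 n 1 n_gt0).
Qed.

Section Ladder.
Variables (M0 : lmodType C) (A0 : affact M0) (i0 : C^o -> M0).
Hypotheses (hA0 : is_affmod A0) (hi0 : is_parhom (D0 C) kC 0 A0 i0).

(* The image of |j, m>_+ in D_0^{k,1}, where J^+_0 acts as J^+_{-1}. *)
Fixpoint ladder (m : nat) : M0 :=
  if m is m'.+1 then (Dplus_coef j m')^-1 *: aJp A0 (-1) (ladder m') else i0 1.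

Let vac := parhom_D0_vacuum hi0.

Lemma ladder_Jp m : aJp A0 (-1) (ladder m) = Dplus_coef j m *: ladder m.+1.
Proof. by rewrite /= scalerA mulfV ?Dplus_coef_neq0 // scale1r. Qed.

Lemma ladder_K m : aK A0 (ladder m) = kC *: ladder m.
Proof.
elim: m => [|m IH] /=; first by case: vac => [[]].
by affmod_linE hA0; rewrite (br_Kp hA0) IH; affmod_linE hA0; rewrite !scalerA mulrC.
Qed.

Lemma ladder_J0 m : aJ0 A0 0 (ladder m) = (2 * m%:R) *: ladder m.
Proof.
elim: m => [|m IH] /=; first by case: vac => [[]] _ _ -> *; rewrite mulr0 scale0r.
affmod_linE hA0; rewrite (J0Jp hA0) IH add0r; affmod_linE hA0.
by move: (Dplus_coef j m)^-1 => c; rewrite -natr1; lmod_ring.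
Qed.

Lemma ladder_d m : ad A0 (ladder m) = - m%:R *: ladder m.
Proof.
elim: m => [|m IH] /=; first by case: vac => [[_ _ _ _ ->]]; rewrite oppr0.
affmod_linE hA0; rewrite (dJp hA0) IH; affmod_linE hA0.
by move: (Dplus_coef j m)^-1 => c; rewrite -natr1; lmod_ring.
Qed.

Lemma ladder_Jp_ge0 m n : 0 <= n -> aJp A0 n (ladder m) = 0.
Proof.
move=> n_ge0; elim: m => [|m IH] /=; last first.
  by affmod_linE hA0; rewrite (JpJp hA0) IH; affmod_linE hA0; rewrite scaler0.
case: vac => [[vJp _ _ _ _] vpos].
by case: (ltgtP n 0) n_ge0 => // [/vpos[]|->].
Qed.

Lemma ladder_J0_gt0 m n : 0 < n -> aJ0 A0 n (ladder m) = 0.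
Proof.
move=> n_gt0; elim: m => [|m IH] /=; first by case: vac => _ /(_ n n_gt0)[].
affmod_linE hA0; rewrite (J0Jp hA0) IH ladder_Jp_ge0; last by lia.
by affmod_linE hA0; rewrite scaler0 addr0 scaler0.
Qed.

Lemma ladder_Jm_gt1 m n : 1 < n -> aJm A0 n (ladder m) = 0.
Proof.
move=> n_gt1; elim: m => [|m IH] /=; first by case: vac => _ /(_ n) []; first lia.
affmod_linE hA0; rewrite (JmJp hA0) IH ladder_J0_gt0; last by lia.
have -> : (-1 + n == 0) = false by apply/eqP; lia.
by affmod_linE hA0; rewrite !addr0 subr0 scaler0.
Qed.

Lemma ladder_Jm1_0 : aJm A0 1 (ladder 0) = 0.
Proof. by case: vac => _ /(_ 1) []. Qed.

Lemma ladder_Jm1 m : aJm A0 1 (ladder m.+1) = - Dplus_coef j m *: ladder m.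
Proof.
have JmJp1 x : aJm A0 1 (aJp A0 (-1) x) =
    aJp A0 (-1) (aJm A0 1 x) - (aJ0 A0 0 x - aK A0 x).
  by rewrite (JmJp hA0) /= mulrN1z scaleN1r.
elim: m => [|m IH].
  apply: (scalerI (Dplus_coef_neq0 0)).
  rewrite -(linmapZ (lin_Jm hA0 _)) -ladder_Jp JmJp1 ladder_Jm1_0 ladder_J0 ladder_K.
  by rewrite (linmap0 (lin_Jp hA0 _)) scalerA mulrN -expr2 Dplus_coef_sqr; lmod_ring.
apply: (scalerI (Dplus_coef_neq0 m.+1)).
rewrite -(linmapZ (lin_Jm hA0 _)) -ladder_Jp JmJp1 IH (linmapZ (lin_Jp hA0 _)) ladder_Jp.
rewrite ladder_J0 ladder_K !scalerA mulNr mulrN -!expr2 !Dplus_coef_sqr.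
by rewrite -!natr1; lmod_ring.
Qed.

Definition ladder_map (p : {poly C}) : M0 := \sum_(m < size p) p`_m *: ladder m.

Lemma ladder_map_widen (p : {poly C}) N :
  (size p <= N)%N -> ladder_map p = \sum_(m < N) p`_m *: ladder m.
Proof.
move=> le_pN; rewrite /ladder_map (big_ord_widen N (fun m => p`_m *: ladder m) le_pN).
rewrite big_mkcond; apply: eq_bigr => i _; case: ifP => // /negbT.
by rewrite -leqNgt => /(nth_default 0) ->; rewrite scale0r.
Qed.

Lemma ladder_map_linmap : linmap ladder_map.
Proof.
move=> a p q; set N := maxn (size p) (size q).
have le_pN : (size p <= N)%N by rewrite leq_maxl.
have le_qN : (size q <= N)%N by rewrite leq_maxr.
have le_apqN : (size (a *: p + q)%R <= N)%N.
  by rewrite (leq_trans (size_polyD _ _)) // geq_max (leq_trans (size_scale_leq _ _)).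
rewrite (ladder_map_widen le_apqN) (ladder_map_widen le_pN) (ladder_map_widen le_qN).
rewrite scaler_sumr -big_split /=.
by apply: eq_bigr => i _; rewrite coefD coefZ scalerDl scalerA.
Qed.

Lemma ladder_mapX m : ladder_map 'X^m = ladder m.
Proof.
rewrite /ladder_map size_polyXn big_ord_recr /= coefXn eqxx scale1r big1 ?add0r // => i _.
by rewrite coefXn ltn_eqF ?scale0r.
Qed.

Lemma ladder_map_sum (p : {poly C}) (a : 'I_(size p) -> C) (g : 'I_(size p) -> nat) :
  ladder_map (\sum_(m < size p) a m *: 'X^(g m)) = \sum_(m < size p) a m *: ladder (g m).
Proof.
rewrite (linmap_sum ladder_map_linmap); apply: eq_bigr => i _.
by rewrite (linmapZ ladder_map_linmap) ladder_mapX.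
Qed.

Lemma ladder_map_eigen (G : M0 -> M0) (c : nat -> C) :
  linmap G -> (forall m, G (ladder m) = c m *: ladder m) ->
  forall p, G (ladder_map p) = \sum_(m < size p) (p`_m * c m) *: ladder m.
Proof.
move=> lG Gc p; rewrite (linmap_sum lG); apply: eq_bigr => i _.
by rewrite (linmapZ lG) Gc scalerA.
Qed.

Lemma ladder_map_eigen_const (G : M0 -> M0) (c : C) :
  linmap G -> (forall m, G (ladder m) = c *: ladder m) ->
  forall p, G (ladder_map p) = c *: ladder_map p.
Proof.
move=> lG Gc p; rewrite (@ladder_map_eigen G (fun=> c)) // scaler_sumr.
by apply: eq_bigr => i _; rewrite scalerA mulrC.
Qed.

Lemma ladder_map_kill (G : M0 -> M0) :
  linmap G -> (forall m, G (ladder m) = 0) -> forall p, G (ladder_map p) = 0.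
Proof.
move=> lG G0 p; rewrite (@ladder_map_eigen_const G 0) ?scale0r // => m.
by rewrite G0 scale0r.
Qed.

Lemma ladder_map_parhom : is_parhom (Dplus j) kC h (sflow 1 A0) ladder_map.
Proof.
have lJp n := lin_Jp hA0 n; have lJm n := lin_Jm hA0 n.
split; first exact: ladder_map_linmap.
split=> [p /=|].
  rewrite ladder_map_sum sub0r (linmap_sum (lJp _)); apply: eq_bigr => i _.
  by rewrite (linmapZ (lJp _)) ladder_Jp [RHS]scalerA.
split=> [p /=|].
  rewrite ladder_map_sum add0r (linmap_sum (lJm _)); apply: eq_bigr => -[[|m] lt_m] _ /=.
    by rewrite mul0r sqrtC0 mulr0 oppr0 scale0r (linmapZ (lJm _)) ladder_Jm1_0 scaler0.
  have -> : (m.+1%:R - 1 : C) = m%:R by rewrite -natr1 addrK.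
  by rewrite (linmapZ (lJm _)) ladder_Jm1 scalerA mulrN.
split=> [p /=|].
  rewrite ladder_map_sum (@ladder_map_eigen (fun x => aJ0 A0 0 x - 1%:~R *: aK A0 x)
    (fun m => 2 * m%:R - kC)).
  - by apply: eq_bigr => i _; rewrite mulrBr twice_half.
  - exact: linmap_add (lin_J0 hA0 0) (linmap_opp (linmap_scale _ (lin_K hA0))).
  - by move=> m; rewrite ladder_J0 ladder_K scalerA mul1r -scalerBl.
split=> [p /=|]; first exact: ladder_map_eigen_const (lin_K hA0) ladder_K p.
split=> [p|n p n_gt0 /=].
  apply/ladder_map_eigen_const => [|m /=]; first exact: lin_d (sflow_affmod 1 hA0).
  rewrite ladder_d ladder_J0 ladder_K !scalerA -!scalerDl -scalerBl weight_half_level.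
  by congr (_ *: _); field.
have -> : (n == 0) = false by apply/eqP; lia.
split; apply: ladder_map_kill (_ : linmap _) _ p.
- exact: lin_Jp.
- by move=> m; apply: ladder_Jp_ge0; lia.
- exact: lin_Jm.
- by move=> m; apply: ladder_Jm_gt1; lia.
- exact: lin_J0.
- by move=> m; apply: ladder_J0_gt0.
Qed.

End Ladder.

Section Quotient.
Variables (Mp : lmodType C) (Ap : affact Mp) (ip : {poly C} -> Mp).
Variables (M0 : lmodType C) (A0 : affact M0) (i0 : C^o -> M0).
Hypotheses (hP : is_prolongation (Dplus j) kC h Ap ip)
  (h0 : is_prolongation (D0 C) kC 0 A0 i0).

Let hAp := prolong_affmod hP.
Let hA0 := prolong_affmod h0.
Let hi0 := prolong_parhom h0.
Let hW := gen_sub_submod Ap (aJm Ap (-1) (ip 1)).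

Local Notation Q := (quot_space (submod0 hW) (submod_lin hW)).
Local Notation pr := (qproj (submod0 hW) (submod_lin hW)).
Local Notation qr := (@qrepr _ _ _ (submod0 hW) (submod_lin hW)).
Local Notation QA := (quot_act hW).
Local Notation w := (aJm Ap (-1) (ip 1)).
Local Notation ladder := (ladder A0 i0).
Local Notation ladder_map := (ladder_map A0 i0).

Definition lw_class (p : {poly C}) := pr (ip p).

Lemma lw_class_parhom : is_parhom (Dplus j) kC h QA lw_class.
Proof. exact: parhom_comp (qproj_affhom hAp hW) (prolong_parhom hP). Qed.

Lemma lw_class_vacuum : is_vacuum (sflow (-1) QA) kC 0 (lw_class 1).
Proof.
apply: Dplus_flow_vacuum (quot_act_affmod hAp hW) lw_class_parhom _; rewrite /lw_class.
case: (qproj_affhom hAp hW) => _ [_ [<- _]].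
by apply/qproj_eq0; apply: gen_sub_gen.
Qed.

Lemma ladder_lift_kills (phi : Mp -> M0) :
  is_affhom Ap (sflow 1 A0) phi -> (forall p, phi (ip p) = ladder_map p) ->
  forall x, gen_sub Ap w x -> phi x = 0.
Proof.
move=> phi_hom phi_ip x; apply: affhom_gen_sub0 (sflow_affmod 1 hA0) (phi_hom) _.
case: phi_hom => _ [_ [-> _]]; rewrite phi_ip -(expr0 'X) ladder_mapX /= addNr.
by case: (parhom_D0_vacuum hi0) => [[]].
Qed.

Lemma vacuum_lift_ladder (psi : M0 -> Q) :
  is_affhom A0 (sflow (-1) QA) psi -> (forall c, psi (i0 c) = c *: lw_class 1) ->
  forall p, psi (ladder_map p) = lw_class p.
Proof.
move=> [lpsi [psiJp _]] psi_i0 p.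
have [lcls [clsJp _]] := lw_class_parhom.
have psi_ladder m : psi (ladder m) = lw_class 'X^m.
  elim: m => [|m IH] /=; first by rewrite psi_i0 scale1r expr0.
  rewrite (linmapZ lpsi) psiJp sflowJp IH subrr -clsJp Dplus_JpX (linmapZ lcls).
  by rewrite scalerA mulVf ?Dplus_coef_neq0 // scale1r.
rewrite -[in RHS](coefK p) poly_def (linmap_sum lcls) (linmap_sum lpsi).
by apply: eq_bigr => i _; rewrite (linmapZ lpsi) (linmapZ lcls) psi_ladder.
Qed.

Lemma Dplus_flow_quotient :
  exists phi : Mp -> M0,
    [/\ is_affhom Ap (sflow 1 A0) phi, (forall y, exists x, phi x = y) &
        (forall x, phi x = 0 <-> gen_sub Ap w x)].
Proof.
have hQ := sflow_affmod (-1) (quot_act_affmod hAp hW).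
have [phi [phi_hom phi_ip]] :=
  prolong_lift hP (sflow_affmod 1 hA0) (ladder_map_parhom hA0 hi0).
have phiW := ladder_lift_kills phi_hom phi_ip.
have [psi [psi_hom psi_i0]] := prolong_lift h0 hQ (vacuum_parhom_D0 hQ lw_class_vacuum).
have [bar_hom bar_pr] := affhom_factor hW phi_hom phiW.
exists phi; split=> // [y|x]; last split=> [phix0|]; last exact: phiW.
- have rho_hom : is_affhom A0 A0 ((phi \o qr) \o psi).
    apply: affhom_comp psi_hom; apply: affhom_ext (acteq_refl _) (sflowK (-1) A0) _.
    exact: affhom_sflow.
  have rho_id := prolong_uniq h0 hA0 rho_hom (affhom_id A0).
  exists (qr (psi y)); apply: rho_id => c /=.
  rewrite psi_i0 /lw_class -qprojZ bar_pr (linmapZ (proj1 phi_hom)) phi_ip.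
  rewrite -(expr0 'X) ladder_mapX /= -(linmapZ (proj1 hi0)); congr i0; exact: mulr1.
- have sigma_hom : is_affhom Ap QA (psi \o phi).
    apply: affhom_comp phi_hom; apply: affhom_ext (acteq_refl _) (sflowK 1 QA) _.
    exact: affhom_sflow.
  apply/(qproj_eq0 (submod0 hW) (submod_lin hW)).
  have := prolong_uniq hP (quot_act_affmod hAp hW) (qproj_affhom hAp hW) sigma_hom.
  move=> /(_ _)/(_ x) -> /=; first by rewrite phix0 (linmap0 (proj1 psi_hom)).
  by move=> p /=; rewrite phi_ip vacuum_lift_ladder.
Qed.

End Quotient.

End AtLevel.

Theorem proposition3p11 (C : numClosedFieldType) (k : int) (hk : k < -2)
  (Mp : lmodType C) (Ap : affact Mp) (ip : {poly C} -> Mp)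
  (Mm : lmodType C) (Am : affact Mm) (im : {poly C} -> Mm)
  (M0 : lmodType C) (A0 : affact M0) (i0 : C^o -> M0) :
  let kC : C := k%:~R in
  let j : C := kC / 2 in
  let h : C := - (j * (j + 1)) / (kC + 2) in
  is_prolongation (Dplus j) kC h Ap ip ->
  is_prolongation (Dminus j) kC h Am im ->
  is_prolongation (D0 C) kC 0 A0 i0 ->
  (exists phi : Mp -> M0,
      [/\ is_affhom Ap (sflow 1 A0) phi,
          (forall y, exists x, phi x = y) &
          (forall x, phi x = 0 <-> gen_sub Ap (aJm Ap (-1) (ip 1)) x)]) /\
  (exists phi : Mm -> M0,
      [/\ is_affhom Am (sflow (-1) A0) phi,
          (forall y, exists x, phi x = y) &
          (forall x, phi x = 0 <-> gen_sub Am (aJp Am (-1) (im 1)) x)]).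
Proof.
move=> kC j h hp hm h0.
have kC_Nnat (m : nat) : kC != m%:R by rewrite pmulrn eqr_int; apply/eqP; lia.
have kC_neqN2 : kC + 2 != 0.
  by rewrite -[2]/(2%:~R : C) -rmorphD intr_eq0; apply/eqP; lia.
split; first exact: (Dplus_flow_quotient kC_Nnat kC_neqN2 hp h0).
have [phi [phi_hom phi_surj phi_ker]] := Dplus_flow_quotient kC_Nnat kC_neqN2
  (prolong_ext (omega_Dminus j) (omega_prolong hm))
  (prolong_ext (omega_D0 C) (omega_prolong h0)).
exists phi; split=> // [|x].
  exact: affhom_ext (omegaK Am) (omega_sflow 1 A0) (omega_affhom phi_hom).
by rewrite phi_ker; exact: gen_sub_omega.
Qed.
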